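(* Let $T$ be a first-order $\mathscr L$-theory. A model $A$ of $T$ is geometrically closed in $\mathrm{Mod}(T)$ if and only if it is geometrically closed in $\mathrm{Mod}(T_W)$.
   Context: A quasi-algebraic formula has the form $\forall\bar y\,(\bigwedge\Phi(\bar x,\bar y)\to\psi(\bar x,\bar y))$ with $\Phi\cup\{\psi\}$ a finite set of atomic formulas; $T_W$ is the set of quasi-algebraic sentences implied by $T$. A homomorphism of $\mathscr L$-structures preserves atomic sentences with parameters. A homomorphism $f:A\to B$ is geometrically closed if for every quasi-algebraic sentence $\phi(\bar a)$ with parameters in $A$ with $A\models\phi(\bar a)$, one has $B\models\phi(f\bar a)$. $A$ is geometrically closed in a class $\mathcal C$ containing $A$ if every homomorphism from $A$ to a member of $\mathcal C$ is geometrically closed. *)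

From mathcomp Require Import all_boot.
From Stdlib Require List.
Set Implicit Arguments.
Unset Strict Implicit.
Unset Printing Implicit Defensive.

Record language := Language {
  func : Type;
  rel : Type;
  farity : func -> nat;
  rarity : rel -> nat }.

Section Syntax.
Variable L : language.

Inductive term : Type :=
  | tvar : nat -> term
  | tapp : forall f : func L, ('I_(farity f) -> term) -> term.

Inductive atomic : Type :=
  | aeq : term -> term -> atomic
  | arel : forall r : rel L, ('I_(rarity r) -> term) -> atomic.

(* first-order formulas with equality, de Bruijn-indexed quantifiers *)
Inductive formula : Type :=
  | fatom : atomic -> formula
  | fbot : formula
  | fneg : formula -> formula
  | fand : formula -> formula -> formula
  | forr : formula -> formula -> formula
  | fimp : formula -> formula -> formula
  | fall : formula -> formula
  | fex : formula -> formula.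

Fixpoint term_bounded (k : nat) (t : term) : Prop :=
  match t with
  | tvar i => i < k
  | tapp f ts => forall i, term_bounded k (ts i)
  end.

Definition atomic_bounded (k : nat) (a : atomic) : Prop :=
  match a with
  | aeq t1 t2 => term_bounded k t1 /\ term_bounded k t2
  | arel r ts => forall i, term_bounded k (ts i)
  end.

Fixpoint formula_bounded (k : nat) (p : formula) : Prop :=
  match p with
  | fatom a => atomic_bounded k a
  | fbot => True
  | fneg q => formula_bounded k q
  | fand q r | forr q r | fimp q r => formula_bounded k q /\ formula_bounded k r
  | fall q | fex q => formula_bounded k.+1 q
  end.

Definition sentence (p : formula) : Prop := formula_bounded 0 p.

(* A quasi-algebraic formula  forall y_0 .. y_{k-1} (/\ Phi -> psi):
   the variables 0 .. k-1 are the universally bound ones (the tuple y),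
   the variables >= k are the free ones (the tuple x). *)
Record qa_formula : Type := QA {
  qa_nbound : nat;
  qa_hyps : seq atomic;
  qa_concl : atomic }.

Definition qa_sentence (q : qa_formula) : Prop :=
  (forall a, List.In a (qa_hyps q) -> atomic_bounded (qa_nbound q) a) /\
  atomic_bounded (qa_nbound q) (qa_concl q).

End Syntax.

Arguments tvar {L}.

Record structure (L : language) := Structure {
  carrier :> Type;
  interp_f : forall f : func L, ('I_(farity f) -> carrier) -> carrier;
  interp_r : forall r : rel L, ('I_(rarity r) -> carrier) -> Prop }.

Section Semantics.
Variables (L : language) (M : structure L).

Fixpoint eval (e : nat -> M) (t : term L) : M :=
  match t with
  | tvar i => e i
  | tapp f ts => interp_f (fun i => eval e (ts i))
  end.

Definition sat_atomic (e : nat -> M) (a : atomic L) : Prop :=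
  match a with
  | aeq t1 t2 => eval e t1 = eval e t2
  | arel r ts => interp_r (fun i => eval e (ts i))
  end.

Definition scons (m : M) (e : nat -> M) : nat -> M :=
  fun i => match i with 0 => m | j.+1 => e j end.

Fixpoint sat (e : nat -> M) (p : formula L) : Prop :=
  match p with
  | fatom a => sat_atomic e a
  | fbot => False
  | fneg q => ~ sat e q
  | fand q r => sat e q /\ sat e r
  | forr q r => sat e q \/ sat e r
  | fimp q r => sat e q -> sat e r
  | fall q => forall m : M, sat (scons m e) q
  | fex q => exists m : M, sat (scons m e) q
  end.

Definition sat_qa (e : nat -> M) (q : qa_formula L) : Prop :=
  forall e' : nat -> M,
    (forall i, qa_nbound q <= i -> e' i = e i) ->
    (forall a, List.In a (qa_hyps q) -> sat_atomic e' a) ->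
    sat_atomic e' (qa_concl q).

End Semantics.

Definition theory (L : language) := formula L -> Prop.

Definition is_theory (L : language) (T : theory L) : Prop :=
  forall p, T p -> sentence p.

Definition model_of (L : language) (T : theory L) (M : structure L) : Prop :=
  forall p, T p -> forall e : nat -> M, sat e p.

Definition TW (L : language) (T : theory L) (q : qa_formula L) : Prop :=
  qa_sentence q /\ forall M : structure L, model_of T M -> forall e : nat -> M, sat_qa e q.

Definition model_of_qa (L : language) (S : qa_formula L -> Prop) (M : structure L) : Prop :=
  forall q, S q -> forall e : nat -> M, sat_qa e q.

Definition homomorphism (L : language) (A B : structure L) (f : A -> B) : Prop :=
  forall (a : atomic L) (e : nat -> A), sat_atomic e a -> sat_atomic (f \o e) a.

Definition geometrically_closed_hom (L : language) (A B : structure L) (f : A -> B) : Prop :=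
  forall (q : qa_formula L) (e : nat -> A), sat_qa e q -> sat_qa (f \o e) q.

(* A is geometrically closed in the class C (A is assumed to belong to C) *)
Definition geometrically_closed_in (L : language) (C : structure L -> Prop)
    (A : structure L) : Prop :=
  forall (B : structure L) (f : A -> B), C B -> homomorphism f -> geometrically_closed_hom f.

From mathcomp Require Import all_boot.
From mathcomp Require Import boolp classical_sets filter.
From Stdlib Require List.
Set Implicit Arguments.
Unset Strict Implicit.
Unset Printing Implicit Defensive.
Local Open Scope classical_set_scope.

(* Suppose [A] is geometrically closed in Mod(T), [B] is a model of T_W and
   [f : A -> B] a homomorphism under which a quasi-algebraic sentence true in [A]
   fails; the failure is an atomic formula [chi] false under some valuation [e]
   of [B] satisfying the hypotheses.  Every finite fragment of the positive
   diagram of [B] maps into a model of [T] keeping [chi] false at the image of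
   [e]: otherwise the fragment, its equality diagram and [chi] assemble into a
   quasi-algebraic sentence implied by [T], hence true in [B], yet refuted by the
   valuation the fragment came from.  An ultraproduct of these models over an
   ultrafilter containing the sets of fragments refining a given one is, by Łoś,
   a model [C] of [T] with a homomorphism [g : B -> C] keeping [chi] false at
   [g \o e]; then [g \o f] contradicts the closedness of [A].  The converse holds
   because Mod(T) is contained in Mod(T_W). *)

Definition interleave (X : Type) (E1 E2 : nat -> X) (n : nat) : X :=
  if odd n then E2 n./2 else E1 n./2.

Lemma comp_interleave (X Y : Type) (g : X -> Y) (E1 E2 : nat -> X) :
  g \o interleave E1 E2 = interleave (g \o E1) (g \o E2).
Proof. by apply/funext => n; rewrite /= /interleave; case: odd. Qed.

Lemma factor_below (X Y : Type) N (E : nat -> X) (E' : nat -> Y) :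
  (forall i j, i < N -> j < N -> E i = E j -> E' i = E' j) ->
  exists c : X -> Y, forall n, n < N -> c (E n) = E' n.
Proof.
move=> E'E; exists (fun x => if pselect (exists2 n, n < N & E n = x) is left h
                            then E' (s2val (cid2 h)) else E' 0).
move=> n nN; case: pselect => [h|[]]; last by exists n.
by case: cid2 => m /= mN Emn; apply: E'E.
Qed.

Section Syntax.
Variable L : language.

Fixpoint rename_term (s : nat -> nat) (t : term L) : term L :=
  match t with
  | tvar i => tvar (s i)
  | tapp f ts => tapp (fun j => rename_term s (ts j))
  end.

Definition rename_atomic (s : nat -> nat) (a : atomic L) : atomic L :=
  match a with
  | aeq t1 t2 => aeq (rename_term s t1) (rename_term s t2)
  | arel r ts => arel (fun j => rename_term s (ts j))
  end.

Fixpoint term_var_bound (t : term L) : nat :=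
  match t with
  | tvar i => i.+1
  | tapp f ts => \max_(j < farity f) term_var_bound (ts j)
  end.

Definition atomic_var_bound (a : atomic L) : nat :=
  match a with
  | aeq t1 t2 => maxn (term_var_bound t1) (term_var_bound t2)
  | arel r ts => \max_(j < rarity r) term_var_bound (ts j)
  end.

Definition atomics_var_bound (s : seq (atomic L)) : nat :=
  foldr (fun a n => maxn (atomic_var_bound a) n) 0 s.

Lemma term_boundedW k k' (t : term L) :
  k <= k' -> term_bounded k t -> term_bounded k' t.
Proof.
move=> kk'; elim: t => [i|f ts IH] /=; first by move=> /leq_trans; apply.
by move=> tsk j; apply: IH.
Qed.

Lemma atomic_boundedW k k' (a : atomic L) :
  k <= k' -> atomic_bounded k a -> atomic_bounded k' a.
Proof.
move=> kk'; case: a => [t1 t2 [t1k t2k]|r ts tsk] /=.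
  by split; apply: term_boundedW kk' _.
by move=> j; apply: term_boundedW kk' _.
Qed.

Lemma term_bounded_var_bound (t : term L) : term_bounded (term_var_bound t) t.
Proof.
elim: t => [i|f ts IH] //= j.
by apply: term_boundedW (IH j); apply: (leq_bigmax_cond j).
Qed.

Lemma atomic_bounded_var_bound (a : atomic L) : atomic_bounded (atomic_var_bound a) a.
Proof.
case: a => [t1 t2|r ts] /=; last first.
  by move=> j; apply: term_boundedW (term_bounded_var_bound _); apply: (leq_bigmax_cond j).
by split; apply: term_boundedW (term_bounded_var_bound _); rewrite ?leq_maxl ?leq_maxr.
Qed.

Lemma atomics_bounded_var_bound (s : seq (atomic L)) a :
  List.In a s -> atomic_bounded (atomics_var_bound s) a.
Proof.
elim: s => [|b s IH] //= [<-|as_].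
  exact: atomic_boundedW (leq_maxl _ _) (atomic_bounded_var_bound _).
exact: atomic_boundedW (leq_maxr _ _) (IH as_).
Qed.

Definition rename_even (a : atomic L) : atomic L := rename_atomic double a.
Definition rename_odd (a : atomic L) : atomic L := rename_atomic (fun n => n.*2.+1) a.

Section Evaluation.
Variable M : structure L.

Lemma eval_rename_term (e : nat -> M) s t : eval e (rename_term s t) = eval (e \o s) t.
Proof. by elim: t => [i|f ts IH] //=; congr interp_f; apply/funext => j. Qed.

Lemma sat_rename_atomic (e : nat -> M) s a :
  sat_atomic e (rename_atomic s a) = sat_atomic (e \o s) a.
Proof.
case: a => [t1 t2|r ts] /=; first by rewrite !eval_rename_term.
by congr interp_r; apply/funext => j; rewrite eval_rename_term.
Qed.

Lemma eq_eval_bounded k (e1 e2 : nat -> M) t :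
  {in gtn k, e1 =1 e2} -> term_bounded k t -> eval e1 t = eval e2 t.
Proof.
move=> e12; elim: t => [i|f ts IH] /=; first exact: e12.
by move=> tsk; congr interp_f; apply/funext => j; apply: IH.
Qed.

Lemma eq_sat_atomic_bounded k (e1 e2 : nat -> M) a :
  {in gtn k, e1 =1 e2} -> atomic_bounded k a -> sat_atomic e1 a = sat_atomic e2 a.
Proof.
move=> e12; case: a => [t1 t2 [t1k t2k]|r ts tsk] /=.
  by rewrite (eq_eval_bounded e12 t1k) (eq_eval_bounded e12 t2k).
by congr interp_r; apply/funext => j; apply: eq_eval_bounded e12 (tsk j).
Qed.

Lemma sat_interleave_even (E1 E2 : nat -> M) a :
  sat_atomic (interleave E1 E2) (rename_even a) = sat_atomic E1 a.
Proof.
rewrite sat_rename_atomic; congr sat_atomic; apply/funext => n /=.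
by rewrite /interleave odd_double doubleK.
Qed.

Lemma sat_interleave_odd (E1 E2 : nat -> M) a :
  sat_atomic (interleave E1 E2) (rename_odd a) = sat_atomic E2 a.
Proof.
rewrite sat_rename_atomic; congr sat_atomic; apply/funext => n /=.
by rewrite /interleave oddS odd_double /= uphalf_double.
Qed.

End Evaluation.

Definition eq_diagram (X : Type) (N : nat) (E : nat -> X) : seq (atomic L) :=
  List.map (fun p : nat * nat => aeq (tvar p.1) (tvar p.2))
    (List.filter (fun p => `[< E p.1 = E p.2 >])
       (List.list_prod (List.seq 0 N) (List.seq 0 N))).

Lemma In_eq_diagram (X : Type) N (E : nat -> X) a :
  List.In a (eq_diagram N E) <->
  exists i j, [/\ i < N, j < N, E i = E j & a = aeq (tvar i) (tvar j)].
Proof.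
rewrite List.in_map_iff; split=> [[[i j] [<-]]|[i [j [iN jN Eij ->]]]].
  rewrite List.filter_In List.in_prod_iff !List.in_seq.
  by move=> [[[_ iN] [_ jN]] /asboolP Eij]; exists i, j; split=> //; apply/ltP.
exists (i, j); split=> //; rewrite List.filter_In List.in_prod_iff !List.in_seq.
by split; [split; split; [apply/leP | apply/ltP | apply/leP | apply/ltP] | apply/asboolP].
Qed.

Lemma eq_diagram_bounded (X : Type) N (E : nat -> X) a :
  List.In a (eq_diagram N E) -> atomic_bounded N a.
Proof. by case/In_eq_diagram => i [j [iN jN _ ->]]. Qed.

Lemma sat_eq_diagram (M : structure L) (X : Type) N (E : nat -> X) (E' : nat -> M) :
  (forall a, List.In a (eq_diagram N E) -> sat_atomic E' a) <->
  (forall i j, i < N -> j < N -> E i = E j -> E' i = E' j).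
Proof.
split=> [sE i j iN jN Eij|E'E a /In_eq_diagram [i [j [iN jN Eij ->]]]].
  by apply: (sE (aeq (tvar i) (tvar j))); apply/In_eq_diagram; exists i, j.
exact: E'E.
Qed.

End Syntax.

Arguments rename_even {L}.
Arguments rename_odd {L}.
Arguments eq_diagram {L X}.

Section UltraFilterFacts.
Variables (I : Type) (U : set_system I).
Context {UF : UltraFilter U}.

Lemma ultra_setC (X : set I) : U (~` X) <-> ~ U X.
Proof.
split=> [UnX UX|nUX]; last by case: (in_ultra_setVsetC X UF).
by apply: (filter_not_empty U); apply: filterS (filterI UX UnX) => i [].
Qed.

Lemma ultra_setU (X Y : set I) : U (X `|` Y) <-> U X \/ U Y.
Proof.
split=> [UXY|[UX|UY]]; last 2 first.
- by apply: filterS UX => i; left.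
- by apply: filterS UY => i; right.
have [UX|UnX] := in_ultra_setVsetC X UF; [by left | right].
by apply: filterS (filterI UXY UnX) => i [[]].
Qed.
End UltraFilterFacts.

Section Ultraproduct.
Variables (L : language) (I : Type) (M : I -> structure L) (U : set_system I).
Context {UF : UltraFilter U}.

Definition ultra_eqv (x y : forall i, M i) : Prop := U [set i | x i = y i].

Lemma ultra_eqv_refl x : ultra_eqv x x.
Proof. exact: filterS filterT. Qed.

Lemma ultra_eqv_sym x y : ultra_eqv x y -> ultra_eqv y x.
Proof. exact: filterS. Qed.

Lemma ultra_eqv_trans x y z : ultra_eqv x y -> ultra_eqv y z -> ultra_eqv x z.
Proof. by move=> xy yz; apply: filterS (filterI xy yz) => i [xyi /(etrans xyi)]. Qed.

Definition ultra_carrier := {Q : (forall i, M i) -> Prop | exists x, Q = ultra_eqv x}.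

Definition ultra_class (x : forall i, M i) : ultra_carrier :=
  exist _ (ultra_eqv x) (ex_intro _ x erefl).

Definition ultra_repr (z : ultra_carrier) : forall i, M i := sval (cid (svalP z)).

Lemma ultra_class_eqP x y : ultra_class x = ultra_class y <-> ultra_eqv x y.
Proof.
split=> [/(congr1 sval)/= ->|xy]; first exact: ultra_eqv_refl.
apply: eq_exist; apply/funext => z; apply/propext; split=> [xz|yz].
  exact: ultra_eqv_trans (ultra_eqv_sym xy) xz.
exact: ultra_eqv_trans xy yz.
Qed.

Lemma ultra_reprK z : ultra_class (ultra_repr z) = z.
Proof.
case: z => Q QP; apply: eq_exist; rewrite /ultra_repr /=.
by case: cid => x /= ->.
Qed.

Lemma ultra_classK x : ultra_eqv (ultra_repr (ultra_class x)) x.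
Proof. by apply/ultra_class_eqP; rewrite ultra_reprK. Qed.

Definition ultraproduct : structure L :=
  @Structure L ultra_carrier
    (fun f args => ultra_class (fun i => interp_f (fun j => ultra_repr (args j) i)))
    (fun r args => U [set i | interp_r (fun j => ultra_repr (args j) i)]).

Lemma ultra_classK_family n (y : 'I_n -> forall i, M i) :
  U [set i | (fun j => ultra_repr (ultra_class (y j)) i) = (fun j => y j i)].
Proof.
by apply: filterS (filter_forall _ (fun j => ultra_classK (y j))) => i /funext.
Qed.

Lemma eval_ultra (e : nat -> forall i, M i) (t : term L) :
  @eval L ultraproduct (fun k => ultra_class (e k)) t =
  ultra_class (fun i => eval (fun k => e k i) t).
Proof.
elim: t => [k|f ts IH] //=; apply/ultra_class_eqP.
apply: filterS (ultra_classK_family (fun j i => eval (fun k => e k i) (ts j))) => i /= yi.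
by congr interp_f; rewrite -yi; apply/funext => j; rewrite IH.
Qed.

Lemma sat_atomic_ultra (e : nat -> forall i, M i) (a : atomic L) :
  @sat_atomic L ultraproduct (fun k => ultra_class (e k)) a <->
  U [set i | sat_atomic (fun k => e k i) a].
Proof.
case: a => [t1 t2|r ts] /=; first by rewrite !eval_ultra ultra_class_eqP.
under eq_fun => i do under eq_fun => j do rewrite eval_ultra.
have yi := ultra_classK_family (fun j i => eval (fun k => e k i) (ts j)).
by split=> h; apply: filterS (filterI yi h) => i /= [-> //].
Qed.

Variable point : forall i, M i.

Lemma ultra_witness (P : forall i, M i -> Prop) :
  U [set i | exists y, P i y] -> exists x : forall i, M i, U [set i | P i (x i)].
Proof.
move=> UP; exists (fun i => if pselect (exists y, P i y) is left Pi then sval (cid Pi)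
                           else point i).
by apply: filterS UP => i Pi /=; case: pselect => // {}Pi; case: cid.
Qed.

Definition ultra_cons (x : forall i, M i) (e : nat -> forall i, M i) k : forall i, M i :=
  if k is k'.+1 then e k' else x.

Lemma scons_ultra_class x e :
  scons (ultra_class x : ultraproduct) (fun k => ultra_class (e k)) =
  (fun k => ultra_class (ultra_cons x e k)).
Proof. by apply/funext => -[]. Qed.

Lemma ultra_cons_at x e i : (fun k => ultra_cons x e k i) = scons (x i) (fun k => e k i).
Proof. by apply/funext => -[]. Qed.

Theorem sat_ultra (p : formula L) (e : nat -> forall i, M i) :
  @sat L ultraproduct (fun k => ultra_class (e k)) p <->
  U [set i | sat (fun k => e k i) p].
Proof.
elim: p e => [a||q IHq|q IHq r IHr|q IHq r IHr|q IHq r IHr|q IH|q IH] e /=.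
- exact: sat_atomic_ultra.
- by split=> //; apply: filter_not_empty.
- by rewrite IHq -ultra_setC.
- rewrite IHq IHr; split=> [[Uq Ur]|Uqr]; first exact: filterI.
  by split; apply: filterS Uqr => i [].
- by rewrite IHq IHr -ultra_setU.
- rewrite IHq IHr; split=> [qr|Uqr Uq]; last first.
    by apply: filterS (filterI Uqr Uq) => i [/[apply]].
  have [/qr|] := in_ultra_setVsetC [set i | sat (fun k => e k i) q] UF.
  + by apply: filterS => i ri _.
  + by apply: filterS => i nqi qi.
- split=> [Uq|Uq m]; last first.
    rewrite -(ultra_reprK m) scons_ultra_class IH.
    by apply: filterS Uq => i /=; rewrite ultra_cons_at.
  apply: contrapT => /(ultra_setC _).2 nUq.
  have [x Ux] : exists x : forall i, M i,
      U [set i | ~ sat (scons (x i) (fun k => e k i)) q].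
    apply: (@ultra_witness (fun i y => ~ sat (scons y (fun k => e k i)) q)).
    by apply: filterS nUq => i /existsNP.
  have := Uq (ultra_class x); rewrite scons_ultra_class IH => Uxq.
  by apply: (filter_not_empty U); apply: filterS (filterI Uxq Ux) => i /= [];
    rewrite ultra_cons_at.
- split=> [[m]|/ultra_witness [x Ux]].
    by rewrite -(ultra_reprK m) scons_ultra_class IH;
      apply: filterS => i /=; rewrite ultra_cons_at; exists (ultra_repr m i).
  by exists (ultra_class x); rewrite scons_ultra_class IH;
    apply: filterS Ux => i /=; rewrite ultra_cons_at.
Qed.

Lemma ultraproduct_model_of (T : theory L) :
  (forall i, model_of T (M i)) -> model_of T ultraproduct.
Proof.
move=> MT p Tp eC.
have -> : eC = (fun k => ultra_class (ultra_repr (eC k))).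
  by apply/funext => k; rewrite ultra_reprK.
by apply/sat_ultra; apply: filterS filterT => i _; apply: MT.
Qed.

End Ultraproduct.

Section SeparatingModel.
Variables (L : language) (T : theory L) (B : structure L).
Variables (e : nat -> B) (chi : atomic L).
Hypotheses (B_TW : model_of_qa (TW T) B) (chi_fails : ~ sat_atomic e chi).

Record fragment := Fragment {
  fragment_facts : seq (atomic L);
  fragment_env : nat -> B;
  fragment_sat : forall a, List.In a fragment_facts -> sat_atomic fragment_env a }.

Definition realizes (M : structure L) (c : B -> M) (P : fragment) : Prop :=
  forall a, List.In a (fragment_facts P) -> sat_atomic (c \o fragment_env P) a.

Definition refines (P P0 : fragment) : Prop :=
  forall (M : structure L) (c : B -> M), realizes c P -> realizes c P0.

Definition separates (M : structure L) (c : B -> M) (P : fragment) : Prop :=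
  [/\ model_of T M, realizes c P & ~ sat_atomic (c \o e) chi].

Definition fragment_even_facts (P : fragment) : seq (atomic L) :=
  List.map rename_even (fragment_facts P).

Lemma fragment_join (P1 P2 : fragment) : exists P, refines P P1 /\ refines P P2.
Proof.
pose facts := fragment_even_facts P1 ++ List.map rename_odd (fragment_facts P2).
pose env := interleave (fragment_env P1) (fragment_env P2).
have env_facts a : List.In a facts -> sat_atomic env a.
  rewrite List.in_app_iff !List.in_map_iff.
  by case=> -[a' [<- a'P]]; rewrite ?sat_interleave_even ?sat_interleave_odd;
    apply: fragment_sat.
exists (Fragment env_facts); split=> M c cP a aP.
  have := cP (rename_even a).
  rewrite /= comp_interleave sat_interleave_even; apply.
  by apply/List.in_app_iff; left; apply: List.in_map.
have := cP (rename_odd a).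
rewrite /= comp_interleave sat_interleave_odd; apply.
by apply/List.in_app_iff; right; apply: List.in_map.
Qed.

Definition fragment_bound (P : fragment) : nat :=
  atomics_var_bound (rename_odd chi :: fragment_even_facts P).

(* The valuation of the fragment sits on the even variables and [e] on the odd
   ones; the equality diagram makes every valuation satisfying the hypotheses
   factor through [B]. *)
Definition fragment_qa (P : fragment) : qa_formula L :=
  QA (fragment_bound P)
    (fragment_even_facts P ++
     eq_diagram (fragment_bound P) (interleave (fragment_env P) e))
    (rename_odd chi).

Lemma fragment_qa_sentence P : qa_sentence (fragment_qa P).
Proof.
split=> /= [a|]; last by apply: atomics_bounded_var_bound; left.
rewrite List.in_app_iff => -[aP|/eq_diagram_bounded //].
by apply: atomics_bounded_var_bound; right.
Qed.

Lemma fragment_qa_fails P : ~ sat_qa (interleave (fragment_env P) e) (fragment_qa P).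
Proof.
move=> /(_ _ (fun _ _ => erefl)); rewrite /= sat_interleave_odd => sat_P.
apply: chi_fails; apply: sat_P => a.
rewrite List.in_app_iff List.in_map_iff => -[[a' [<- a'P]]|].
  by rewrite sat_interleave_even; apply: fragment_sat.
by move: a; apply/sat_eq_diagram.
Qed.

Lemma fragment_qa_TW P :
  ~ (exists (M : structure L) (c : B -> M), separates c P) -> TW T (fragment_qa P).
Proof.
move=> unseparable; split=> [|M MT e0]; first exact: fragment_qa_sentence.
move=> e' _ e'_hyps; rewrite /fragment_qa /= in e'_hyps *.
set env := interleave (fragment_env P) e in e'_hyps *.
have [c cE] : exists c : B -> M, forall n, n < fragment_bound P -> c (env n) = e' n.
  apply: factor_below; apply/sat_eq_diagram => a aD.
  by apply: e'_hyps; apply/List.in_app_iff; right.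
have e'E k :
    atomic_bounded (fragment_bound P) k -> sat_atomic e' k = sat_atomic (c \o env) k.
  by apply: eq_sat_atomic_bounded => n /cE.
rewrite e'E ?comp_interleave ?sat_interleave_odd; last first.
  by apply: atomics_bounded_var_bound; left.
apply: contrapT => chi_fails_c; apply: unseparable; exists M, c; split=> // a aP.
have := e'_hyps (rename_even a).
rewrite e'E ?comp_interleave ?sat_interleave_even; first apply.
  by apply/List.in_app_iff; left; apply: List.in_map.
by apply: atomics_bounded_var_bound; right; apply: List.in_map.
Qed.

Lemma fragment_separable P : exists (M : structure L) (c : B -> M), separates c P.
Proof.
apply: contrapT => /fragment_qa_TW /B_TW /(_ (interleave (fragment_env P) e)).
exact: fragment_qa_fails.
Qed.

Definition trivial_fragment : fragment :=
  @Fragment [::] e (fun a (a_nil : List.In a [::]) => False_ind _ a_nil).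

Definition eventually_refining : set_system fragment :=
  filter_from setT (fun P0 => [set P | refines P P0]).

Lemma eventually_refining_proper : ProperFilter eventually_refining.
Proof.
apply: filter_from_proper => [|P0 _]; last by exists P0.
apply: filter_from_filter; first by exists trivial_fragment.
move=> P1 P2 _ _; have [P [PP1 PP2]] := fragment_join P1 P2.
by exists P => // Q QP; split=> M c /QP; [apply: PP1 | apply: PP2].
Qed.

Lemma separating_hom_to_model :
  exists (C : structure L) (g : B -> C),
    [/\ model_of T C, homomorphism g & ~ sat_atomic (g \o e) chi].
Proof.
have [U [UF refiningU]] := ultraFilterLemma eventually_refining_proper.
have sep P : {Mc : {M : structure L & B -> M} | separates (projT2 Mc) P}.
  by apply: cid; have [M [c Mc]] := fragment_separable P; exists (existT _ M c).
pose M P := projT1 (sval (sep P)); pose c P : B -> M P := projT2 (sval (sep P)).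
have sepP P : separates (c P) P := svalP (sep P).
exists (ultraproduct M U), (fun b => ultra_class U (fun P => c P b)); split.
- by apply: (ultraproduct_model_of (fun P => c P (e 0))) => P; case: (sepP P).
- move=> a E aE; apply/(sat_atomic_ultra (fun k P => c P (E k))).
  have aE' b : List.In b [:: a] -> sat_atomic E b by case=> // <-.
  apply: refiningU; exists (Fragment aE') => // P /(_ (M P) (c P)) PaE.
  by apply: PaE; [case: (sepP P) | left].
- move=> /(sat_atomic_ultra (fun k P => c P (e k))) Uchi.
  apply: (filter_not_empty U); apply: filterS Uchi => P.
  by case: (sepP P).
Qed.

End SeparatingModel.

Lemma model_of_TW (L : language) (T : theory L) (M : structure L) :
  model_of T M -> model_of_qa (TW T) M.
Proof. by move=> MT q [_ Tq]; apply: Tq. Qed.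

Lemma homomorphism_comp (L : language) (A B C : structure L) (f : A -> B) (g : B -> C) :
  homomorphism f -> homomorphism g -> homomorphism (g \o f).
Proof. by move=> hf hg a e /hf /hg. Qed.

Theorem proposition4p3 (L : language) (T : theory L) (A : structure L) :
  is_theory T -> model_of T A ->
  (geometrically_closed_in (model_of T) A <->
   geometrically_closed_in (model_of_qa (TW T)) A).
Proof.
move=> _ _; split=> [A_closed|A_closed B f /model_of_TW]; last exact: A_closed.
move=> B f B_TW hf q e Aq e' e'e e'_hyps; apply: contrapT => chi_fails.
have [C [g [CT hg chi_fails_C]]] := separating_hom_to_model B_TW chi_fails.
apply: chi_fails_C; apply: (A_closed C (g \o f) CT (homomorphism_comp hf hg) q e Aq).
  by move=> i /e'e /= ->.
by move=> a /e'_hyps /hg.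
Qed.
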